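(* Let $k\ge1$, $k_1,\dots,k_N\in\{0,\dots,k\}$, $M_a=\#\{j\mid k_j=a\}$ ($1\le a\le k$), and let $V_{\mathbf M}$ be the fusion product $\Pi^{(k_1)}*\cdots*\Pi^{(k_N)}$ with cyclic vector $\mathbf v$ (the image of $v^{(k_1)}\otimes\cdots\otimes v^{(k_N)}$). For an indeterminate $\xi$ and every integer $\nu\ge0$, \[ \deg_z\bigl(X(z)+\xi Z(z)-\xi^2Y(z)\bigr)^\nu\mathbf v\le\sum_{i=1}^k\min(\nu,i)M_i-\nu . \]
   Context: $\mathfrak{o}_5=\{\sum c_{ab}e_{ab}\in\mathfrak{gl}_5\mid c_{ab}+c_{6-b,6-a}=0\}$, $X=e_{12}-e_{45}$, $Y=e_{14}-e_{25}$, $Z=\sqrt2(-e_{13}+e_{35})$; $\mathfrak a=\mathrm{span}(X,Y,Z)$ is abelian. $\Pi^{(k)}$ is the irreducible $\mathfrak{o}_5$-module whose highest weight is $k$ times that of $\mathbb{C}^5$, $v^{(k)}$ its lowest weight vector. Fusion product: for pairwise distinct $\zeta_1,\dots,\zeta_N$, $\mathfrak{o}_5[t]$ acts on $\bigotimes_a\Pi^{(k_a)}$ with $x\otimes t^i$ acting on the $a$-th factor by $\zeta_a^ix$; filter by $U^{\le d}(\mathfrak{o}_5[t])(\otimes_a v^{(k_a)})$ (monomials of total $t$-degree $\le d$); $V_{\mathbf M}$ is the associated graded $\mathfrak{o}_5[t]$-module. For $\eta\in\mathfrak a$, $\eta_i$ denotes the action of $\eta\otimes t^i$ on $V_{\mathbf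 M}$ and $\eta(z)=\sum_{i\ge0}\eta_iz^i$ (a polynomial in $z$ since $\eta_i=0$ for $i\ge N$). $\deg_z P\le d$ means the coefficients of $z^j$, $j>d$, in the vector-valued polynomial $P$ (with coefficients polynomial in $\xi$) vanish; if $d<0$ this means $P=0$. *)

From HB Require Import structures.
From mathcomp Require Import all_boot all_order all_algebra.
From mathcomp Require Import mpoly.
Set Implicit Arguments.
Unset Strict Implicit.
Unset Printing Implicit Defensive.
Import Order.TTheory GRing.Theory Num.Theory.
Local Open Scope ring_scope.

Section Defs.
Variable C : numClosedFieldType.

(* 0-based indices: index b of C^5 (1-based) is ord (b-1); 6-b corresponds to rev_ord *)
Local Notation o i := (@inord 4 i).

Definition in_o5 (A : 'M[C]_5) : Prop :=
  forall a b : 'I_5, A a b + A (rev_ord b) (rev_ord a) = 0.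

Definition Xo5 : 'M[C]_5 := delta_mx (o 0) (o 1) - delta_mx (o 3) (o 4).
Definition Yo5 : 'M[C]_5 := delta_mx (o 0) (o 3) - delta_mx (o 1) (o 4).
Definition Zo5 : 'M[C]_5 := sqrtC 2 *: (delta_mx (o 2) (o 4) - delta_mx (o 0) (o 2)).

(* Model of  (x) _a Sym^{k_a}(C^5) : polynomials in variables x_{a,b}
   (a < N, b < 5); the factor a is the degree-k_a part in x_{a,.}.
   Pi^(k_a) is the o_5-submodule of Sym^{k_a} C^5 generated by the lowest
   weight vector e_5^{k_a}. *)
Definition var (N : nat) (a : 'I_N) (b : 'I_5) : 'I_(N * 5) := mxvec_index a b.

(* action of  A (x) t^i  on the tensor product: on the a-th factor,
   zeta_a^i A acting on Sym(C^5) as the derivation sum_{b,c} A_bc x_b d/dx_c *)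
Definition act (N : nat) (zeta : 'I_N -> C) (Ai : 'M[C]_5 * nat)
  (p : {mpoly C[N * 5]}) : {mpoly C[N * 5]} :=
  \sum_(a < N) \sum_(b < 5) \sum_(c < 5)
     (zeta a ^+ Ai.2 * Ai.1 b c) *: ('X_(var a b) * mderiv (var a c) p).

(* cyclic vector v = (x) _a v^(k_a),  v^(k) = e_5^k (lowest weight vector) *)
Definition vac (N : nat) (kk : 'I_N -> nat) : {mpoly C[N * 5]} :=
  \prod_(a < N) 'X_(var a (o 4)) ^+ kk a.

Definition act_seq (N : nat) (zeta : 'I_N -> C) (s : seq ('M[C]_5 * nat))
  (p : {mpoly C[N * 5]}) : {mpoly C[N * 5]} :=
  foldr (act zeta) p s.

(* filtration: w \in U^{<= d}(o_5[t]) v  (d : int; empty for d < 0) *)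
Definition filt (N : nat) (zeta : 'I_N -> C) (kk : 'I_N -> nat) (d : int)
  (w : {mpoly C[N * 5]}) : Prop :=
  exists r : seq (C * seq ('M[C]_5 * nat)),
    (forall e, e \in r ->
       (forall x, x \in e.2 -> in_o5 x.1) /\
       ((\sum_(x <- e.2) x.2)%N%:Z <= d)) /\
    w = \sum_(e <- r) e.1 *: act_seq zeta e.2 (vac kk).

(* X(z) + xi Z(z) - xi^2 Y(z) = sum_i z^i sum_{l<3} xi^l (letter l)_i *)
Definition letter (l : 'I_3) : 'M[C]_5 :=
  match val l with 0 => Xo5 | 1 => Zo5 | _ => - Yo5 end.

(* representative in U^{<= j} v of the coefficient of z^j xi^m of
   (X(z) + xi Z(z) - xi^2 Y(z))^nu v *)
Definition coeffW (N : nat) (zeta : 'I_N -> C) (kk : 'I_N -> nat)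
  (nu j m : nat) : {mpoly C[N * 5]} :=
  \sum_(f : {ffun 'I_nu -> 'I_j.+1 * 'I_3} |
          ((\sum_(s < nu) val (f s).1 == j)%N &&
           (\sum_(s < nu) val (f s).2 == m)%N))
     act_seq zeta [seq (letter (f s).2, val (f s).1) | s <- enum 'I_nu]
       (vac kk).

(* deg_z (X(z)+xi Z(z)-xi^2 Y(z))^nu v <= d in V_M = gr U(o_5[t]) v:
   for every j > d and every m, the coefficient of z^j xi^m (which lies in
   the graded piece F^j / F^{j-1}) vanishes, i.e. its representative lies
   in F^{j-1}. *)
Definition deg_le (N : nat) (zeta : 'I_N -> C) (kk : 'I_N -> nat)
  (nu : nat) (d : int) : Prop :=
  forall j m : nat, d < j%:Z ->
    filt zeta kk (j%:Z - 1) (coeffW zeta kk nu j m).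

End Defs.

(* Let w(z) = X(z) + xi Z(z) - xi^2 Y(z) and let D_a be the action of X + xi Z - xi^2 Y
   on the a-th tensor factor.  Since (X + xi Z - xi^2 Y)^2 e_5 = 0, D_a kills
   w_a = D_a x_{a,5}, so D_a^m (x_{a,5}^k_a) = (k_a)_m x_{a,5}^(k_a - m) w_a^m: it vanishes
   for m > k_a and is killed by D_b for b <> a.  Hence the z^j coefficient of w(z)^nu v
   is a sum over a : [nu] -> [N] with #a^-1(b) <= k_b of
   h_j(zeta_{a_1}, ..., zeta_{a_nu}) prod_b D_b^{#a^-1(b)} (x_{b,5}^k_b), where h_j is the
   z^j coefficient of prod_s (1 - zeta_{a_s} z)^-1.  For such a, multiplying that product
   by D(z) = prod_b (1 - zeta_b z)^min(nu, k_b) leaves a polynomial of degree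
   sum_b min(nu, k_b) - nu.  So for larger j the z^j coefficient of D(z) w(z)^nu v
   vanishes, and since D(0) = 1 the z^j coefficient of w(z)^nu v is a combination of
   lower ones, which lie in U^{<= j-1} v.  The coefficients in xi are separated by
   evaluating at infinitely many xi. *)

From mathcomp Require Import all_boot all_order all_algebra.
From mathcomp Require Import mpoly.
From mathcomp Require Import ring zify.
Set Implicit Arguments.
Unset Strict Implicit.
Unset Printing Implicit Defensive.
Import Order.TTheory GRing.Theory Num.Theory.
Local Open Scope ring_scope.

Section LetterMatrices.
Variable C : numClosedFieldType.

Lemma ord5_cases (P : 'I_5 -> Prop) :
  P (inord 0) -> P (inord 1) -> P (inord 2) -> P (inord 3) -> P (inord 4) ->
  forall a, P a.
Proof.
move=> P0 P1 P2 P3 P4 a; rewrite -(inord_val a).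
by case: a => [[|[|[|[|[|//]]]]] ?].
Qed.

Lemma big_ord5 (V : nmodType) (F : 'I_5 -> V) :
  \sum_(b < 5) F b = F (inord 0) + F (inord 1) + F (inord 2) + F (inord 3) + F (inord 4).
Proof.
rewrite !big_ord_recr big_ord0 /= add0r.
by do !congr (_ + _); congr F; apply/val_inj; rewrite /= inordK.
Qed.

Lemma eq_inord5 (i j : nat) : (i < 5)%N -> (j < 5)%N -> (@inord 4 i == inord j) = (i == j).
Proof. by move=> ilt jlt; apply/eqP/eqP => [/(congr1 val)|->//]; rewrite /= !inordK. Qed.

Lemma rev_inord5 (i : nat) : (i < 5)%N -> rev_ord (@inord 4 i) = inord (4 - i).
Proof. by move=> ilt; apply/val_inj; rewrite /= !inordK // ltnS leq_subr. Qed.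

Lemma in_o5_letter l : in_o5 (letter C l).
Proof.
move=> a b; case: l => [[|[|[|//]]] ?];
  rewrite /letter /Xo5 /Yo5 /Zo5 /=; move: a b; apply: ord5_cases; apply: ord5_cases;
  rewrite ?rev_inord5 //= !mxE ?eq_inord5 //=;
  by rewrite ?(mulr0, mulr1, mulrN1, subrr, subr0, sub0r, addr0, oppr0, addrN, addNr).
Qed.

Definition eta_mx (xi : C) : 'M[C]_5 := \sum_(l < 3) xi ^+ l *: letter C l.

Lemma eta_mx_sqr_lowest xi b : (eta_mx xi *m eta_mx xi) b (inord 4) = 0.
Proof.
rewrite mxE big_ord5 /eta_mx !big_ord_recr big_ord0 /= add0r !mxE.
move: b; apply: ord5_cases;
  rewrite /letter /= /Xo5 /Yo5 /Zo5 ?mxE ?eq_inord5 //= ?(mulr0, mulr1, subrr, subr0, sub0r,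
    addr0, add0r, oppr0, mul0r, expr0, expr1, scale1r).
all: have := sqrtCK (2 : C); set s := sqrtC 2 => s2.
all: try ring.
by transitivity (xi ^+ 2 * (2 - s ^+ 2)); [ring | rewrite s2 subrr mulr0].
Qed.

End LetterMatrices.

Section Filtration.
Variables (C : numClosedFieldType) (N : nat) (zeta : 'I_N -> C) (kk : 'I_N -> nat).
Local Notation filt := (filt zeta kk).

Lemma filt0 d : filt d 0.
Proof. by exists [::]; rewrite big_nil. Qed.

Lemma filtD d w1 w2 : filt d w1 -> filt d w2 -> filt d (w1 + w2).
Proof.
move=> [r1 [r1P ->]] [r2 [r2P ->]]; exists (r1 ++ r2); rewrite big_cat; split=> // e.
by rewrite mem_cat => /orP[/r1P|/r2P].
Qed.

Lemma filtZ d c w : filt d w -> filt d (c *: w).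
Proof.
move=> [r [rP ->]]; exists [seq (c * e.1, e.2) | e <- r]; split.
  by move=> e /mapP[e' /rP ? ->].
by rewrite big_map scaler_sumr; apply: eq_bigr => e _; rewrite scalerA.
Qed.

Lemma filt_sum d (I : Type) (r : seq I) (P : pred I) (F : I -> {mpoly C[N * 5]}) :
  (forall i, P i -> filt d (F i)) -> filt d (\sum_(i <- r | P i) F i).
Proof. by move=> FP; apply: big_ind => //; [exact: filt0 | exact: filtD]. Qed.

Lemma filt_le d d' w : d <= d' -> filt d w -> filt d' w.
Proof.
move=> le_dd' [r [rP ->]]; exists r; split=> // e /rP[? ?]; split=> //.
exact: le_trans le_dd'.
Qed.

Lemma filt_act_seq d s : (forall x, x \in s -> in_o5 x.1) ->
  (\sum_(x <- s) x.2)%N%:Z <= d -> filt d (act_seq zeta s (vac C kk)).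
Proof.
move=> sP le_sd; exists [:: (1, s)]; rewrite big_seq1 scale1r; split=> // e.
by rewrite inE => /eqP ->.
Qed.

Definition coeffW_trunc nu J j m : {mpoly C[N * 5]} :=
  \sum_(f : {ffun 'I_nu -> 'I_J.+1 * 'I_3} |
          ((\sum_(s < nu) val (f s).1 == j)%N && (\sum_(s < nu) val (f s).2 == m)%N))
     act_seq zeta [seq (letter C (f s).2, val (f s).1) | s <- enum 'I_nu] (vac C kk).

Lemma filt_coeffW_trunc nu J j m : filt j%:Z (coeffW_trunc nu J j m).
Proof.
apply: filt_sum => f /andP[/eqP <- _]; apply: filt_act_seq.
  by move=> x /mapP[s _ ->]; apply: in_o5_letter.
by rewrite big_map big_enum.
Qed.

End Filtration.

Section MatrixDerivation.
Variables (R : comNzRingType) (N : nat).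
Local Notation V := {mpoly R[N * 5]}.
Local Notation X a b := ('X_(var a b) : V).

Lemma var_inj (a a' : 'I_N) (b b' : 'I_5) : var a b = var a' b' -> a = a' /\ b = b'.
Proof.
have [g mxvecK _] := curry_mxvec_bij N 5.
move=> eq_var; have := mxvecK (a, b) isT; have := mxvecK (a', b') isT.
by rewrite /= -/(var a b) -/(var a' b') eq_var => -> [-> ->].
Qed.

Lemma mderiv_var (i j : 'I_(N * 5)) : mderiv i ('X_j : V) = (j == i)%:R.
Proof.
rewrite mderivX mnm1E; case: eqP => [->|_]; last by rewrite scale0r.
rewrite scale1r (_ : (U_(i) - U_(i))%MM = 0%MM) ?mpolyX0 //.
by apply/mnmP => x; rewrite mnmBE mnm0E subnn.
Qed.

Definition mxder (A : 'M[R]_5) (a : 'I_N) (p : V) : V :=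
  \sum_(b < 5) \sum_(c < 5) A b c *: (X a b * mderiv (var a c) p).

Lemma mxderD A a p q : mxder A a (p + q) = mxder A a p + mxder A a q.
Proof.
rewrite /mxder -big_split; apply: eq_bigr => b _; rewrite -big_split.
by apply: eq_bigr => c _; rewrite mderivD mulrDr scalerDr.
Qed.

Lemma mxderZ A a r p : mxder A a (r *: p) = r *: mxder A a p.
Proof.
rewrite /mxder scaler_sumr; apply: eq_bigr => b _; rewrite scaler_sumr.
by apply: eq_bigr => c _; rewrite mderivZ -scalerAr !scalerA mulrC.
Qed.

Lemma mxder0 A a : mxder A a 0 = 0.
Proof. by rewrite -[0 in LHS](scale0r (0 : V)) mxderZ scale0r. Qed.

Lemma mxder_sum A a (I : Type) (r : seq I) (P : pred I) (F : I -> V) :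
  mxder A a (\sum_(i <- r | P i) F i) = \sum_(i <- r | P i) mxder A a (F i).
Proof. exact: (big_morph _ (mxderD A a) (mxder0 A a)). Qed.

Lemma mxderM A a p q : mxder A a (p * q) = mxder A a p * q + p * mxder A a q.
Proof.
rewrite /mxder mulr_suml mulr_sumr -big_split; apply: eq_bigr => b _.
rewrite mulr_suml mulr_sumr -big_split; apply: eq_bigr => c _.
by rewrite mderivM mulrDr scalerDr -scalerAl -scalerAr !mulrA (mulrC p).
Qed.

Lemma mxder1 A a : mxder A a 1 = 0.
Proof.
rewrite /mxder big1 // => b _; rewrite big1 // => c _.
by rewrite -mpolyC1 mderivC mulr0 scaler0.
Qed.

Lemma mxderX A a p n : mxder A a (p ^+ n) = (p ^+ n.-1 * mxder A a p) *+ n.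
Proof.
elim: n => [|n IHn]; first by rewrite expr0 mxder1 mulr0n.
rewrite exprS mxderM IHn mulrnAr mulrA -exprS.
case: n {IHn} => [|n]; first by rewrite expr0 mulr1 mul1r addr0.
by rewrite mulrC -mulrS.
Qed.

Lemma mxder_var A a a' c :
  mxder A a (X a' c) = if a' == a then \sum_(b < 5) A b c *: X a b else 0.
Proof.
rewrite /mxder; case: eqP => [<-|ne_a].
  apply: eq_bigr => b _; rewrite (bigD1 c) //= mderiv_var eqxx mulr1 big1 ?addr0 // => c' ne_c.
  rewrite mderiv_var; case: eqP => [/var_inj[_ eq_c]|]; last by rewrite mulr0 scaler0.
  by rewrite eq_c eqxx in ne_c.
apply: big1 => b _; apply: big1 => c' _; rewrite mderiv_var.
by case: eqP => [/var_inj[]|]; rewrite ?mulr0 ?scaler0.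
Qed.

End MatrixDerivation.

Section ActionLinearity.
Variables (C : numClosedFieldType) (N : nat) (zeta : 'I_N -> C).
Local Notation V := {mpoly C[N * 5]}.

Lemma act_mxder A i (p : V) : act zeta (A, i) p = \sum_(a < N) zeta a ^+ i *: mxder A a p.
Proof.
rewrite /act; apply: eq_bigr => a _; rewrite scaler_sumr; apply: eq_bigr => b _.
by rewrite scaler_sumr; apply: eq_bigr => c _; rewrite scalerA.
Qed.

Lemma actD Ai (p q : V) : act zeta Ai (p + q) = act zeta Ai p + act zeta Ai q.
Proof.
case: Ai => A i; rewrite !act_mxder -big_split.
by apply: eq_bigr => a _; rewrite mxderD scalerDr.
Qed.

Lemma actZ Ai r (p : V) : act zeta Ai (r *: p) = r *: act zeta Ai p.
Proof.
case: Ai => A i; rewrite !act_mxder scaler_sumr.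
by apply: eq_bigr => a _; rewrite mxderZ !scalerA mulrC.
Qed.

Lemma act_sum Ai (I : Type) (r : seq I) (P : pred I) (F : I -> V) :
  act zeta Ai (\sum_(i <- r | P i) F i) = \sum_(i <- r | P i) act zeta Ai (F i).
Proof.
have act0 : act zeta Ai 0 = 0 by rewrite -[0 in LHS](scale0r (0 : V)) actZ scale0r.
exact: (big_morph _ (actD Ai) act0).
Qed.

Lemma act_lincomb (I : Type) (r : seq I) (P : pred I) (c : I -> C) (A : I -> 'M[C]_5) i
    (p : V) :
  act zeta (\sum_(l <- r | P l) c l *: A l, i) p =
  \sum_(l <- r | P l) c l *: act zeta (A l, i) p.
Proof.
have actDmx B B' : act zeta (B + B', i) p = act zeta (B, i) p + act zeta (B', i) p.
  rewrite /act -big_split; apply: eq_bigr => a _; rewrite -big_split; apply: eq_bigr => b _.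
  by rewrite -big_split; apply: eq_bigr => c' _; rewrite /= mxE mulrDr scalerDl.
have act0mx : act zeta (0, i) p = 0.
  by rewrite /act big1 // => a _; rewrite big1 // => b _; rewrite big1 // => c' _;
     rewrite /= mxE mulr0 scale0r.
rewrite (big_morph (fun B => act zeta (B, i) p) actDmx act0mx); apply: eq_bigr => l _.
rewrite /act scaler_sumr; apply: eq_bigr => a _; rewrite scaler_sumr; apply: eq_bigr => b _.
by rewrite scaler_sumr; apply: eq_bigr => c' _; rewrite /= mxE scalerA mulrCA.
Qed.

End ActionLinearity.

Section LowestWeightOrbit.
Variables (C : numClosedFieldType) (N : nat) (zeta : 'I_N -> C) (kk : 'I_N -> nat).
Variable xi : C.
Local Notation V := {mpoly C[N * 5]}.
Local Notation X a b := ('X_(var a b) : V).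
Local Notation D := (mxder (eta_mx xi)).

Definition eta_lowest (a : 'I_N) : V := \sum_(b < 5) eta_mx xi b (inord 4) *: X a b.

(* [orbit_vec a m = D a ^ m (x_{a,5} ^ k_a)], see [mxder_orbit_vec]. *)
Definition orbit_vec (a : 'I_N) (m : nat) : V :=
  (kk a ^_ m)%:R *: (X a (inord 4) ^+ (kk a - m) * eta_lowest a ^+ m).

Definition orbit_mono (n : 'I_N -> nat) : V := \prod_(a < N) orbit_vec a (n a).

Definition incr (n : 'I_N -> nat) (a : 'I_N) : 'I_N -> nat :=
  fun a' => (n a' + (a' == a))%N.

Lemma mxder_eta_lowest a a' : D a (eta_lowest a') = 0.
Proof.
rewrite /eta_lowest mxder_sum; under eq_bigr do rewrite mxderZ mxder_var.
case: eqP => _; last by apply: big1 => b _; rewrite scaler0.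
under eq_bigr do rewrite scaler_sumr.
rewrite exchange_big /=; apply: big1 => b _.
rewrite -[RHS](scale0r (X a b)) -(eta_mx_sqr_lowest xi b) mxE scaler_suml.
by apply: eq_bigr => c _; rewrite scalerA mulrC.
Qed.

Lemma mxder_orbit_vec a m : D a (orbit_vec a m) = orbit_vec a m.+1.
Proof.
rewrite /orbit_vec mxderZ mxderM !mxderX mxder_eta_lowest mxder_var eqxx -/(eta_lowest a).
rewrite mulr0 mul0rn mulr0 addr0 ffactnSr natrM -scalerA; congr (_ *: _).
by rewrite scaler_nat -mulrnAl -mulrA -exprS subnS mulrnAl.
Qed.

Lemma mxder_orbit_vec_neq a a' m : a' != a -> D a (orbit_vec a' m) = 0.
Proof.
move=> ne_a; rewrite /orbit_vec mxderZ mxderM !mxderX mxder_eta_lowest mxder_var (negbTE ne_a).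
by rewrite !mulr0 !mul0rn !mulr0 mul0r add0r scaler0.
Qed.

Lemma mxder_orbit_mono a n : D a (orbit_mono n) = orbit_mono (incr n a).
Proof.
have Dothers : D a (\prod_(a' < N | a' != a) orbit_vec a' (n a')) = 0.
  apply: (big_ind (fun q => D a q = 0)); first exact: mxder1.
    by move=> p q Dp Dq; rewrite mxderM Dp Dq mul0r mulr0 addr0.
  by move=> a' ne_a; apply: mxder_orbit_vec_neq.
rewrite /orbit_mono (bigD1 a) //= mxderM mxder_orbit_vec Dothers mulr0 addr0.
rewrite [in RHS](bigD1 a) //= /incr eqxx addn1; congr (_ * _).
by apply: eq_bigr => a' ne_a; rewrite (negbTE ne_a) addn0.
Qed.

Lemma act_orbit_mono i n :
  act zeta (eta_mx xi, i) (orbit_mono n) = \sum_(a < N) zeta a ^+ i *: orbit_mono (incr n a).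
Proof. by rewrite act_mxder; apply: eq_bigr => a _; rewrite mxder_orbit_mono. Qed.

Lemma eq_orbit_mono n n' : n =1 n' -> orbit_mono n = orbit_mono n'.
Proof. by move=> eq_n; apply: eq_bigr => a _; rewrite eq_n. Qed.

Lemma orbit_mono0 : orbit_mono (fun _ => 0%N) = vac C kk.
Proof.
by apply: eq_bigr => a _; rewrite /orbit_vec ffactn0 expr0 mulr1 subn0 scale1r.
Qed.

Lemma orbit_mono_eq0 n a : (kk a < n a)%N -> orbit_mono n = 0.
Proof.
by move=> lt_k; rewrite /orbit_mono (bigD1 a) //= /orbit_vec ffact_small // scale0r mul0r.
Qed.

End LowestWeightOrbit.

Section FfunCons.
Variable T : finType.

Definition fcons n (x : T) (g : {ffun 'I_n -> T}) : {ffun 'I_n.+1 -> T} :=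
  [ffun s => if unlift ord0 s is Some s' then g s' else x].

Lemma fcons0 n x (g : {ffun 'I_n -> T}) : fcons x g ord0 = x.
Proof. by rewrite ffunE unlift_none. Qed.

Lemma fconsS n x (g : {ffun 'I_n -> T}) s : fcons x g (lift ord0 s) = g s.
Proof. by rewrite ffunE liftK. Qed.

Lemma big_ffunS (R : Type) (idx : R) (op : Monoid.com_law idx) n
    (F : {ffun 'I_n.+1 -> T} -> R) :
  \big[op/idx]_(f : {ffun 'I_n.+1 -> T}) F f =
  \big[op/idx]_(x : T) \big[op/idx]_(g : {ffun 'I_n -> T}) F (fcons x g).
Proof.
rewrite pair_bigA (reindex (fun p : T * {ffun 'I_n -> T} => fcons p.1 p.2)) //=.
exists (fun f => (f ord0, [ffun s => f (lift ord0 s)])) => [[x g] _ | f _] /=.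
  by rewrite fcons0; congr pair; apply/ffunP => s; rewrite ffunE fconsS.
by apply/ffunP => s; rewrite ffunE; case: unliftP => [s' ->|->]; rewrite ?ffunE.
Qed.

Lemma big_fcons (R : Type) (idx : R) (op : Monoid.law idx) n (G : T -> R) x
    (g : {ffun 'I_n -> T}) :
  \big[op/idx]_(s < n.+1) G (fcons x g s) = op (G x) (\big[op/idx]_(s < n) G (g s)).
Proof.
by rewrite big_ord_recl fcons0 (eq_bigr (fun s => G (g s))) // => s _; rewrite fconsS.
Qed.

Lemma map_fcons (U : Type) n (H : T -> U) x (g : {ffun 'I_n -> T}) :
  [seq H (fcons x g s) | s <- enum 'I_n.+1] = H x :: [seq H (g s) | s <- enum 'I_n].
Proof.
rewrite enum_ordSl /= fcons0 -map_comp; congr cons.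
by apply: eq_map => s /=; rewrite fconsS.
Qed.

End FfunCons.

Definition geom_trunc (R : nzRingType) J (c : R) : {poly R} := \sum_(i < J.+1) c ^+ i *: 'X^i.

Lemma coef_geom_trunc (R : nzRingType) J (c : R) i :
  (i <= J)%N -> (geom_trunc J c)`_i = c ^+ i.
Proof. by move=> le_iJ; rewrite coef_sumMXn (big_ord1_eq _ (fun i => c ^+ i)) ifT. Qed.

Definition occ N n (a : {ffun 'I_n -> 'I_N}) (a0 : 'I_N) : nat := \sum_(s < n) (a s == a0).

Section GeneratingSeries.
Variables (C : numClosedFieldType) (N : nat) (zeta : 'I_N -> C) (kk : 'I_N -> nat).
Variable xi : C.
Local Notation V := {mpoly C[N * 5]}.

(* The coefficient of [z ^ j] in [(X(z) + xi Z(z) - xi ^ 2 Y(z)) ^ n v], for a numerical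
   value of [xi] and with only the letters [x (x) t ^ i], [i <= J], retained. *)
Definition zcoef n J j : V :=
  \sum_(f : {ffun 'I_n -> 'I_J.+1 * 'I_3} | (\sum_(s < n) val (f s).1 == j)%N)
     xi ^+ (\sum_(s < n) val (f s).2) *:
     act_seq zeta [seq (letter C (f s).2, val (f s).1) | s <- enum 'I_n] (vac C kk).

Lemma sum_coeffW_trunc n J j M : (2 * n < M)%N ->
  \sum_(m < M) xi ^+ m *: coeffW_trunc zeta kk n J j m = zcoef n J j.
Proof.
move=> ltM; rewrite /coeffW_trunc /zcoef.
under eq_bigr do rewrite scaler_sumr big_mkcondr.
rewrite exchange_big /=; apply: eq_bigr => f _; rewrite -big_mkcond /=.
under eq_bigl do rewrite eq_sym.
rewrite (big_ord1_eq _ (fun m => xi ^+ m *: act_seq zeta _ (vac C kk))) ifT //.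
apply: leq_ltn_trans ltM; rewrite mulnC -[X in (_ <= X * _)%N]card_ord -sum_nat_const.
by apply: leq_sum => s _; rewrite -ltnS.
Qed.

Lemma zcoef_rec n J j : zcoef n.+1 J j =
  \sum_(i < J.+1 | (i <= j)%N) act zeta (eta_mx xi, val i) (zcoef n J (j - i)%N).
Proof.
transitivity (\sum_(i < J.+1) \sum_(l < 3) if (i <= j)%N then
    xi ^+ l *: act zeta (letter C l, val i) (zcoef n J (j - i)%N) else 0); last first.
  rewrite [RHS]big_mkcond; apply: eq_bigr => i _; case: ifP => _; last by rewrite big1.
  by rewrite /eta_mx act_lincomb.
rewrite pair_bigA /zcoef big_mkcond big_ffunS; apply: eq_bigr => -[i l] _ /=.
under eq_bigr do rewrite (big_fcons _ (fun x => val x.1)) (big_fcons _ (fun x => val x.2))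
    (map_fcons (fun x => (letter C x.2, val x.1))) /=.
case: (leqP i j) => [le_ij | lt_ji]; last first.
  by apply: big1 => g _; rewrite ifF // gtn_eqF // ltn_addr.
rewrite act_sum scaler_sumr [RHS]big_mkcond; apply: eq_bigr => g _.
rewrite -{1}(subnKC le_ij) eqn_add2l; case: ifP => // _.
by rewrite actZ scalerA exprD.
Qed.

Lemma zcoef_closed n J j : (j <= J)%N ->
  zcoef n J j = \sum_(a : {ffun 'I_n -> 'I_N})
    (\prod_(s < n) geom_trunc J (zeta (a s)))`_j *: orbit_mono kk xi (occ a).
Proof.
elim: n j => [|n IHn] j le_jJ.
  rewrite /zcoef big_mkcond; under eq_bigr do rewrite !big_ord0 enum_ord0 /=.
  have occ0 (a : {ffun 'I_0 -> 'I_N}) : orbit_mono kk xi (occ a) = vac C kk.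
    by rewrite -(orbit_mono0 kk xi); apply: eq_orbit_mono => a0; rewrite /occ big_ord0.
  under [RHS]eq_bigr do rewrite big_ord0 coef1 occ0.
  rewrite !sumr_const !card_ffun !card_ord !expn0 !mulr1n.
  by case: j {le_jJ} => [|j]; rewrite ?expr0 ?scale1r ?scale0r.
rewrite zcoef_rec (eq_bigl (fun i : 'I_J.+1 => (i < j.+1)%N)) //.
rewrite -(big_ord_widen J.+1 (fun i => act zeta (eta_mx xi, i) (zcoef n J (j - i)%N))) //.
transitivity (\sum_(i < j.+1) \sum_(a : {ffun 'I_n -> 'I_N}) \sum_(a0 < N)
    (zeta a0 ^+ i * (\prod_(s < n) geom_trunc J (zeta (a s)))`_(j - i)) *:
    orbit_mono kk xi (incr (occ a) a0)).
  apply: eq_bigr => i _; rewrite IHn; last exact: leq_trans (leq_subr _ _) le_jJ.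
  rewrite act_sum; apply: eq_bigr => a _; rewrite actZ act_orbit_mono scaler_sumr.
  by apply: eq_bigr => a0 _; rewrite scalerA mulrC.
rewrite [RHS]big_ffunS exchange_big /=; under eq_bigr do rewrite exchange_big /=.
rewrite exchange_big /=; apply: eq_bigr => a0 _; apply: eq_bigr => a _.
rewrite (big_fcons _ (fun c => geom_trunc J (zeta c))) coefM scaler_suml.
apply: eq_bigr => i _; rewrite coef_geom_trunc; last by rewrite (leq_trans _ le_jJ) // -ltnS.
congr (_ *: _); apply: eq_orbit_mono => a'.
by rewrite /incr /occ (big_fcons _ (fun x => nat_of_bool (x == a'))) addnC eq_sym.
Qed.

End GeneratingSeries.

Section Occurrences.
Variables (N n : nat) (a : {ffun 'I_n -> 'I_N}).

Lemma occ_le a0 : (occ a a0 <= n)%N.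
Proof. by rewrite -[leqRHS]card_ord -sum1_card; apply: leq_sum => s _; case: (_ == _). Qed.

Lemma sum_occ : (\sum_(a0 < N) occ a a0)%N = n.
Proof.
rewrite /occ exchange_big /= -[RHS]card_ord -sum1_card; apply: eq_bigr => s _.
by rewrite (bigD1 (a s)) //= eqxx big1 // => a0 /negbTE; rewrite eq_sym => ->.
Qed.

Lemma prod_occ (R : comNzRingType) (F : 'I_N -> R) :
  \prod_(s < n) F (a s) = \prod_(a0 < N) F a0 ^+ occ a a0.
Proof.
under [RHS]eq_bigr do rewrite /occ -prodrXr.
rewrite exchange_big /=; apply: eq_bigr => s _.
by rewrite (bigD1 (a s)) //= eqxx expr1 big1 ?mulr1 // => a0 /negbTE; rewrite eq_sym => ->.
Qed.

End Occurrences.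

Section TruncatedPowerSeries.
Variable R : comNzRingType.

Definition one_upto J (p : {poly R}) := forall i, (i <= J)%N -> p`_i = (i == 0%N)%:R.

Lemma coefM_one_upto J p q i : one_upto J p -> (i <= J)%N -> (p * q)`_i = q`_i.
Proof.
move=> p1 le_iJ; rewrite coefM big_ord_recl p1 // mul1r subn0 big1 ?addr0 // => k _.
by rewrite p1 ?mul0r // (leq_trans _ le_iJ) // ltn_ord.
Qed.

Lemma one_upto_prod J n (F : 'I_n -> {poly R}) :
  (forall s, one_upto J (F s)) -> one_upto J (\prod_(s < n) F s).
Proof.
move=> F1; apply: big_ind => [i _|p q p1 q1 i le_iJ|s _]; last exact: F1.
  by rewrite coef1.
by rewrite (coefM_one_upto _ p1 le_iJ) q1.
Qed.

Lemma one_upto_geom_trunc J (c : R) : one_upto J ((1 - c%:P * 'X) * geom_trunc J c).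
Proof.
move=> [|i] le_iJ; rewrite mulrBl mul1r coefB -mulrA coefCM coefXM coef_geom_trunc //=.
  by rewrite mulr0 subr0.
by rewrite coef_geom_trunc ?exprS ?subrr // ltnW.
Qed.

Lemma size_one_subCX_exp (c : R) e : (size ((1 - c%:P * 'X) ^+ e)%R <= e.+1)%N.
Proof.
have size_one_subCX : (size (1 - c%:P * 'X)%R <= 2)%N.
  rewrite (leq_trans (size_polyD _ _)) // geq_max size_poly1 size_polyN.
  by rewrite (leq_trans (size_polyMleq _ _)) // size_polyX addn2 ltnS size_polyC_leq1.
apply: leq_trans (size_poly_exp_leq _ _) _; rewrite ltnS -[leqRHS]mul1n leq_mul2r.
by rewrite -subn1 leq_subLR size_one_subCX orbT.
Qed.

Lemma size_prod_leq_sum n (F : 'I_n -> {poly R}) (e : 'I_n -> nat) :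
  (forall s, size (F s) <= (e s).+1)%N ->
  (size (\prod_(s < n) F s)%R <= (\sum_(s < n) e s).+1)%N.
Proof.
move=> sizeF; elim/big_rec2: _ => [|s d p _ size_p]; first by rewrite size_poly1.
apply: leq_trans (size_polyMleq _ _) _; have := sizeF s; lia.
Qed.

End TruncatedPowerSeries.

Lemma poly_fun_eq0 (R : numDomainType) M (w : nat -> R) :
  (forall x : R, \sum_(i < M) w i * x ^+ i = 0) -> forall i, (i < M)%N -> w i = 0.
Proof.
move=> w0 i lt_iM; pose q : {poly R} := \poly_(i < M) w i.
suff q0 : q = 0 by have := coef_poly M w i; rewrite -/q q0 coef0 lt_iM.
apply/eqP; apply: contraT => nz_q.
have := max_poly_roots nz_q (rs := [seq (k%:R : R) | k <- iota 0 (size q)]).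
rewrite size_map size_iota ltnn; apply.
  by apply/allP => x /mapP[k _ ->]; rewrite /root horner_poly w0.
by rewrite map_inj_uniq ?iota_uniq // => k k' /eqP; rewrite eqr_nat => /eqP.
Qed.

Lemma mpoly_fun_eq0 (R : numDomainType) n M (w : nat -> {mpoly R[n]}) :
  (forall x : R, \sum_(i < M) x ^+ i *: w i = 0) -> forall i, (i < M)%N -> w i = 0.
Proof.
move=> w0 i lt_iM; apply/mpolyP => e; rewrite mcoeff0.
apply: (poly_fun_eq0 (w := fun i => (w i)@_e)) lt_iM => x.
rewrite -[RHS](mcoeff0 _ e) -(w0 x) raddf_sum; apply: eq_bigr => k _.
by rewrite mulrC -mcoeffZ.
Qed.

Section Recurrence.
Variables (C : numClosedFieldType) (N : nat) (zeta : 'I_N -> C) (kk : 'I_N -> nat).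
Variable nu : nat.

Definition annih_poly : {poly C} := \prod_(a < N) (1 - (zeta a)%:P * 'X) ^+ minn nu (kk a).

Lemma coef0_annih_poly : annih_poly`_0 = 1.
Proof.
rewrite -horner_coef0 horner_prod; apply: big1 => a _.
by rewrite horner_exp !hornerE subr0 expr1n.
Qed.

Lemma coef_annih_poly_geom_trunc (a : {ffun 'I_nu -> 'I_N}) J j :
  (forall a0, occ a a0 <= kk a0)%N -> (j <= J)%N ->
  (\sum_(a0 < N) minn nu (kk a0) < j + nu)%N ->
  (annih_poly * \prod_(s < nu) geom_trunc J (zeta (a s)))`_j = 0.
Proof.
move=> occ_le_kk le_jJ lt_j.
have occ_le_min a0 : (occ a a0 <= minn nu (kk a0))%N by rewrite leq_min occ_le occ_le_kk.
pose E := \prod_(a0 < N) (1 - (zeta a0)%:P * 'X) ^+ (minn nu (kk a0) - occ a a0).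
have -> : annih_poly * \prod_(s < nu) geom_trunc J (zeta (a s)) =
    (\prod_(s < nu) ((1 - (zeta (a s))%:P * 'X) * geom_trunc J (zeta (a s)))) * E.
  rewrite big_split /= mulrAC (prod_occ a (fun a0 => 1 - (zeta a0)%:P * 'X)) /E -big_split.
  by congr (_ * _); apply: eq_bigr => a0 _ /=; rewrite -exprD subnKC.
rewrite (coefM_one_upto _ (one_upto_prod (fun s => @one_upto_geom_trunc _ J _)) le_jJ).
apply: nth_default; apply: leq_trans (size_prod_leq_sum (fun a0 => size_one_subCX_exp _ _)) _.
have le_nu : (nu <= \sum_(a0 < N) minn nu (kk a0))%N.
  by rewrite -{1}(sum_occ a); apply: leq_sum => a0 _.
by rewrite sumnB // sum_occ ltn_subLR // addnC.
Qed.

Lemma annih_recurrence j M : (2 * nu < M)%N ->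
  (\sum_(a0 < N) minn nu (kk a0) < j + nu)%N -> forall m, (m < M)%N ->
  \sum_(l < j.+1) annih_poly`_l *: coeffW_trunc zeta kk nu j (j - l)%N m = 0.
Proof.
(* Weighted by xi ^ m, the left side becomes the z ^ j coefficient of [annih_poly] times
   the closed form of the generating series, which vanishes term by term. *)
move=> ltM lt_j; apply: mpoly_fun_eq0 => xi.
under eq_bigr do rewrite scaler_sumr.
rewrite exchange_big /=.
under eq_bigr => l _ do
  (under eq_bigr do rewrite scalerA mulrC -scalerA; rewrite -scaler_sumr sum_coeffW_trunc //).
under eq_bigr => l _ do rewrite zcoef_closed ?leq_subr // scaler_sumr.
rewrite exchange_big /=; apply: big1 => a _.
under eq_bigr do rewrite scalerA.
rewrite -scaler_suml -coefM.
have [/forallP occ_le_kk | /forallPn[a0]] := boolP [forall a0, occ a a0 <= kk a0]%N.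
  by rewrite coef_annih_poly_geom_trunc // scale0r.
by rewrite -ltnNge => /orbit_mono_eq0 ->; rewrite scaler0.
Qed.

End Recurrence.

Lemma sum_minn_card (N k nu : nat) (kk : 'I_N -> nat) : (forall a, kk a <= k)%N ->
  (\sum_(1 <= i < k.+1) minn nu i * #|[set a | kk a == i]|)%N =
  (\sum_(a < N) minn nu (kk a))%N.
Proof.
move=> le_kk; under eq_bigr do rewrite -sum1_card big_distrr big_mkcond /=.
rewrite exchange_big /=; apply: eq_bigr => a _.
under eq_bigr => i _ do rewrite inE muln1 eq_sym.
rewrite -big_mkcond big_nat1_eq ltnS le_kk andbT.
by case: (kk a) => [|?]; rewrite ?minn0.
Qed.

Unset Implicit Arguments.

Theorem proposition3p7 (C : numClosedFieldType) (k N : nat)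
  (kk : 'I_N -> nat) (zeta : 'I_N -> C) :
  (1 <= k)%N -> (forall a, kk a <= k)%N -> injective zeta ->
  forall nu : nat,
    deg_le zeta kk nu
      ((\sum_(1 <= i < k.+1) (minn nu i * #|[set a | kk a == i]|))%N%:Z
       - nu%:Z).
Proof.
move=> _ le_kk _ nu; rewrite sum_minn_card // => j m lt_j.
have lt_jnu : (\sum_(a < N) minn nu (kk a) < j + nu)%N.
  by move: lt_j; rewrite ltrBlDr -PoszD ltz_nat.
change (filt zeta kk (j%:Z - 1) (coeffW_trunc zeta kk nu j j m)).
have ltM : (2 * nu < (m + 2 * nu).+1)%N by rewrite ltnS leq_addl.
have lt_mM : (m < (m + 2 * nu).+1)%N by rewrite ltnS leq_addr.
have := annih_recurrence zeta ltM lt_jnu lt_mM.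
rewrite big_ord_recl subn0 coef0_annih_poly scale1r => /eqP; rewrite addr_eq0 => /eqP ->.
rewrite -scaleN1r; apply/filtZ/filt_sum => l _; apply/filtZ.
apply: filt_le (filt_coeffW_trunc zeta kk nu j _ m).
by have := ltn_ord l; rewrite lift0; lia.
Qed.
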